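(* Let $\mathcal{P}=\langle \mathrm{Pr},A,\to\rangle$ be a process LTS and $\mathcal{E}=\langle \mathrm{Env},A,\Rightarrow\rangle$ an environment LTS. For all processes $p,q\in\mathrm{Pr}$ and all environments $e\in\mathrm{Env}$: (1) $p \le_e q \iff (p \mathbin{\&_\bullet} e) \le (q \mathbin{\&_\bullet} e) \implies (p \mathbin{\&} e)\le (q\mathbin{\&} e) \iff p \le^{ji}_e q$; (2) $p \sim_e q \iff (p \mathbin{\&_\bullet} e) \sim (q \mathbin{\&_\bullet} e) \implies (p \mathbin{\&} e)\sim (q\mathbin{\&} e) \iff p \sim^{ji}_e q$. Here $p\mathbin{\&_\bullet}e$, $q\mathbin{\&_\bullet}e$ are states of the right-determinizing join LTS $\mathcal{P}\mathbin{\&_\bullet}\mathcal{E}$ and $p\mathbin{\&}e$, $q\mathbin{\&}e$ are states of the join LTS $\mathcal{P}\mathbin{\&}\mathcal{E}$; $\le$ and $\sim$ denote simulatability and bisimilarity in the respective LTS.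
   Context: A labeled transition system (LTS) is a triple $\langle \mathrm{St},A,\to\rangle$ with a set of states $\mathrm{St}$, a set of actions $A$, and a transition relation $\to\subseteq \mathrm{St}\times A\times \mathrm{St}$; write $s\xrightarrow{a}t$. A process LTS $\mathcal{P}=\langle \mathrm{Pr},A,\to\rangle$ has states called processes; an environment LTS $\mathcal{E}=\langle\mathrm{Env},A,\Rightarrow\rangle$ (same action set) has states called environments, transitions written $e\xRightarrow{a}e'$. A simulation on an LTS is a nonempty relation $S$ on states such that whenever $s\,S\,t$ and $s\xrightarrow{a}s'$, there is $t'$ with $t\xrightarrow{a}t'$ and $s'\,S\,t'$ (forth). A bisimulation is a nonempty relation $B$ such that both $B$ and its converse are simulations (forth and back). $s\le t$ (simulatability) iff some simulation relates $s$ to $t$; $s\sim t$ (bisimilarity) iff some bisimulation relates them. An $\mathcal{E}$-parameterized simulation on $\mathcal{P}$ is a family $(S_f)_{f\in\mathrm{Env}}$ of nonempty relations $S_f\subseteq\mathrm{Pr}\times\mathrm{Pr}$ such that whenever $p\,S_e\,q$ and $e\xRightarrow{a}e'$ and $p\xrightarrow{a}p'$, there is $q'$ with $q\xrightarrow{a}q'$ and $p'\,S_{e'}\,q'$. An $\mathcal{E}$-parameterized bisimulation is a family $(B_f)_{f\in\mathrm{Env}}$ of nonempty relations such that whenever $p\,B_e\,q$ and $e\xRightarrow{a}e'$: (forth) every $p\xrightarrow{a}p'$ is matched by some $q\xrightarrow{a}q'$ with $p'\,B_{e'}\,q'$, and (back) every $q\xrightarrow{a}q'$ is matched by some $p\xrightarrow{a}p'$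 with $p'\,B_{e'}\,q'$. Write $p\le_e q$ (parameterized simulatability) if some $\mathcal{E}$-parameterized simulation has $p\,S_e\,q$, and $p\sim_e q$ (parameterized bisimilarity) if some $\mathcal{E}$-parameterized bisimulation has $p\,B_e\,q$. The join LTS of two LTSs $\langle \mathrm{St}_1,A,\to_1\rangle$, $\langle \mathrm{St}_2,A,\to_2\rangle$ has states formal pairs $s_1\mathbin{\&}s_2$ ($s_i\in\mathrm{St}_i$) and transitions $s_1\mathbin{\&}s_2\xrightarrow{a}s_1'\mathbin{\&}s_2'$ iff $s_1\xrightarrow{a}_1 s_1'$ and $s_2\xrightarrow{a}_2 s_2'$. The right-determinizing join LTS $\mathcal{P}\mathbin{\&_\bullet}\mathcal{E}$ has states $p\mathbin{\&_\bullet}e$, action set $A\times\mathrm{Env}$, and transitions $p\mathbin{\&_\bullet}e\xrightarrow{(a,e')}p'\mathbin{\&_\bullet}e'$ iff $p\xrightarrow{a}p'$ and $e\xRightarrow{a}e'$. Ji-parameterized relations: $p\le^{ji}_e q$ iff $p\mathbin{\&}e\le q\mathbin{\&}e$ in $\mathcal{P}\mathbin{\&}\mathcal{E}$; $p\sim^{ji}_e q$ iff $p\mathbin{\&}e\sim q\mathbin{\&}e$; $p\simeq^{ji}_e q$ iff $p\le^{ji}_e q$ and $q\le^{ji}_e p$. *)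

Set Implicit Arguments.

Definition lts (St Act : Type) := St -> Act -> St -> Prop.

Definition nonempty_rel (X : Type) (R : X -> X -> Prop) : Prop :=
  exists s t, R s t.

Definition is_simulation (St Act : Type) (tr : lts St Act) (S : St -> St -> Prop) : Prop :=
  nonempty_rel S /\
  forall s t a s', S s t -> tr s a s' -> exists t', tr t a t' /\ S s' t'.

Definition is_bisimulation (St Act : Type) (tr : lts St Act) (B : St -> St -> Prop) : Prop :=
  is_simulation tr B /\ is_simulation tr (fun s t => B t s).

Definition simulatable (St Act : Type) (tr : lts St Act) (s t : St) : Prop :=
  exists S, is_simulation tr S /\ S s t.

Definition bisimilar (St Act : Type) (tr : lts St Act) (s t : St) : Prop :=
  exists B, is_bisimulation tr B /\ B s t.

Definition is_param_simulation (Pr Env A : Type) (trP : lts Pr A) (trE : lts Env A)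
  (S : Env -> Pr -> Pr -> Prop) : Prop :=
  (forall f, nonempty_rel (S f)) /\
  forall e e' a p q p', S e p q -> trE e a e' -> trP p a p' ->
    exists q', trP q a q' /\ S e' p' q'.

Definition is_param_bisimulation (Pr Env A : Type) (trP : lts Pr A) (trE : lts Env A)
  (B : Env -> Pr -> Pr -> Prop) : Prop :=
  (forall f, nonempty_rel (B f)) /\
  forall e e' a p q, B e p q -> trE e a e' ->
    (forall p', trP p a p' -> exists q', trP q a q' /\ B e' p' q') /\
    (forall q', trP q a q' -> exists p', trP p a p' /\ B e' p' q').

Definition param_simulatable (Pr Env A : Type) (trP : lts Pr A) (trE : lts Env A)
  (e : Env) (p q : Pr) : Prop :=
  exists S, is_param_simulation trP trE S /\ S e p q.

Definition param_bisimilar (Pr Env A : Type) (trP : lts Pr A) (trE : lts Env A)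
  (e : Env) (p q : Pr) : Prop :=
  exists B, is_param_bisimulation trP trE B /\ B e p q.

Definition join_lts (S1 S2 A : Type) (tr1 : lts S1 A) (tr2 : lts S2 A) : lts (S1 * S2) A :=
  fun s a s' => tr1 (fst s) a (fst s') /\ tr2 (snd s) a (snd s').

(* Right-determinizing join P &. E: states (p, e), actions A * Env;
   (p,e) --(a,e')--> (p',e'') iff p -a-> p', e =a=> e' and e'' = e'. *)
Definition rdjoin_lts (Pr Env A : Type) (trP : lts Pr A) (trE : lts Env A)
  : lts (Pr * Env) (A * Env) :=
  fun s ae s' => trP (fst s) (fst ae) (fst s') /\ trE (snd s) (fst ae) (snd ae)
                 /\ snd s' = snd ae.

Definition ji_simulatable (Pr Env A : Type) (trP : lts Pr A) (trE : lts Env A)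
  (e : Env) (p q : Pr) : Prop :=
  simulatable (join_lts trP trE) (p, e) (q, e).

Definition ji_bisimilar (Pr Env A : Type) (trP : lts Pr A) (trE : lts Env A)
  (e : Env) (p q : Pr) : Prop :=
  bisimilar (join_lts trP trE) (p, e) (q, e).


(* A parameterized simulation (S_f) lifts to the relation pairing (p, f) with
   (q, f) whenever p S_f q on [P &. E].  Conversely, a step of [P &. E] names its
   target environment in its label, so a step matching one from (p, f) to
   (p', f') also ends in environment f'; restricting a simulation of [P &. E]
   to pairs with a common environment f therefore gives a parameterized
   simulation.  Dropping the environment label turns steps of [P &. E] into
   steps of [P & E] and back, so simulations of [P &. E] are simulations of
   [P & E].  Bisimulations are pairs of simulations, one for the converse. *)

Lemma is_simulation_ext {St Act : Type} {tr : lts St Act} {R R' : St -> St -> Prop} :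
  (forall s t, R s t <-> R' s t) -> is_simulation tr R -> is_simulation tr R'.
Proof.
  intros HRR' [[s [t Hst]] Hforth]; split.
  - exists s, t; apply HRR'; exact Hst.
  - intros s1 t1 a s1' Hs1t1 Hstep.
    destruct (Hforth s1 t1 a s1' (proj2 (HRR' _ _) Hs1t1) Hstep) as [t1' [Ht Hrel]].
    exists t1'; split; [exact Ht | apply HRR'; exact Hrel].
Qed.

Section Joins.

Variables (Pr Env A : Type) (trP : lts Pr A) (trE : lts Env A).

Lemma is_param_simulation_ext {S S' : Env -> Pr -> Pr -> Prop} :
  (forall f x y, S f x y <-> S' f x y) ->
  is_param_simulation trP trE S -> is_param_simulation trP trE S'.
Proof.
  intros HSS' [Hne Hforth]; split.
  - intro f; destruct (Hne f) as [x [y Hxy]]; exists x, y; apply HSS'; exact Hxy.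
  - intros f f' a x y x' Hxy Hf Hx.
    destruct (Hforth f f' a x y x' (proj2 (HSS' _ _ _) Hxy) Hf Hx) as [y' [Hy Hrel]].
    exists y'; split; [exact Hy | apply HSS'; exact Hrel].
Qed.

Lemma is_param_bisimulation_iff (B : Env -> Pr -> Pr -> Prop) :
  is_param_bisimulation trP trE B <->
  is_param_simulation trP trE B /\ is_param_simulation trP trE (fun f x y => B f y x).
Proof.
  split.
  - intros [Hne Hstep]; split; split.
    + exact Hne.
    + intros f f' a x y x' Hxy Hf; exact (proj1 (Hstep f f' a x y Hxy Hf) x').
    + intro f; destruct (Hne f) as [x [y Hxy]]; exists y, x; exact Hxy.
    + intros f f' a y x y' Hxy Hf; exact (proj2 (Hstep f f' a x y Hxy Hf) y').
  - intros [[Hne Hforth] [_ Hback]]; split; [exact Hne |].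
    intros f f' a x y Hxy Hf; split.
    + intros x'; exact (Hforth f f' a x y x' Hxy Hf).
    + intros y'; exact (Hback f f' a y x y' Hxy Hf).
Qed.

Lemma rdjoin_lts_iff (s s' : Pr * Env) (a : A) (f : Env) :
  rdjoin_lts trP trE s (a, f) s' <-> join_lts trP trE s a s' /\ snd s' = f.
Proof.
  unfold rdjoin_lts, join_lts; simpl; split.
  - intros [Hp [He Hf]]; rewrite Hf; auto.
  - intros [[Hp He] Hf]; rewrite <- Hf; auto.
Qed.

Lemma rdjoin_simulation_is_join_simulation (R : Pr * Env -> Pr * Env -> Prop) :
  is_simulation (rdjoin_lts trP trE) R -> is_simulation (join_lts trP trE) R.
Proof.
  intros [Hne Hforth]; split; [exact Hne |].
  intros s t a s' Hst Hstep.
  destruct (Hforth s t (a, snd s') s' Hst (proj2 (rdjoin_lts_iff _ _ _ _) (conj Hstep eq_refl)))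
    as [t' [Ht Hrel]].
  exists t'; split; [exact (proj1 (proj1 (rdjoin_lts_iff _ _ _ _) Ht)) | exact Hrel].
Qed.

Definition lift_family (S : Env -> Pr -> Pr -> Prop) (s t : Pr * Env) : Prop :=
  snd s = snd t /\ S (snd s) (fst s) (fst t).

(* Adding the diagonal makes every member nonempty without harm: the identity
   family is itself a parameterized simulation. *)
Definition restrict_family (R : Pr * Env -> Pr * Env -> Prop) (f : Env) (x y : Pr) : Prop :=
  R (x, f) (y, f) \/ x = y.

Lemma lift_family_flip (S : Env -> Pr -> Pr -> Prop) (s t : Pr * Env) :
  lift_family (fun f x y => S f y x) s t <-> lift_family S t s.
Proof.
  unfold lift_family; split; intros [Hst HS]; rewrite Hst in *; auto.
Qed.

Lemma restrict_family_flip (R : Pr * Env -> Pr * Env -> Prop) (f : Env) (x y : Pr) :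
  restrict_family (fun s t => R t s) f x y <-> restrict_family R f y x.
Proof.
  unfold restrict_family; split; intros [H | H]; auto.
Qed.

Lemma lift_param_simulation (S : Env -> Pr -> Pr -> Prop) (e : Env) :
  is_param_simulation trP trE S -> is_simulation (rdjoin_lts trP trE) (lift_family S).
Proof.
  intros [Hne Hforth]; split.
  - destruct (Hne e) as [x [y Hxy]]; exists (x, e), (y, e); split; [reflexivity | exact Hxy].
  - intros [x f] [y g] [a f'] s' [Hfg HS] Hstep; simpl in Hfg, HS; subst g.
    apply rdjoin_lts_iff in Hstep as [[Hx Hf] Hs']; simpl in Hx, Hf; subst f'.
    destruct (Hforth f (snd s') a x y (fst s') HS Hf Hx) as [y' [Hy Hrel]].
    exists (y', snd s'); split.
    + apply rdjoin_lts_iff; split; [split; assumption | reflexivity].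
    + split; [reflexivity | exact Hrel].
Qed.

Lemma restrict_rdjoin_simulation (R : Pr * Env -> Pr * Env -> Prop) (p : Pr) :
  is_simulation (rdjoin_lts trP trE) R -> is_param_simulation trP trE (restrict_family R).
Proof.
  intros [_ Hforth]; split.
  - intro f; exists p, p; right; reflexivity.
  - intros f f' a x y x' [HR | <-] Hf Hx.
    + assert (Hstep : rdjoin_lts trP trE (x, f) (a, f') (x', f')) by (repeat split; assumption).
      destruct (Hforth _ _ _ _ HR Hstep) as [[y' g'] [Hy Hrel]].
      apply rdjoin_lts_iff in Hy as [[Hy _] Hg']; simpl in Hy, Hg'; subst g'.
      exists y'; split; [exact Hy | left; exact Hrel].
    + exists x'; split; [exact Hx | right; reflexivity].
Qed.

Lemma param_simulatable_iff_rdjoin (e : Env) (p q : Pr) :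
  param_simulatable trP trE e p q <-> simulatable (rdjoin_lts trP trE) (p, e) (q, e).
Proof.
  split.
  - intros [S [HS Hpq]].
    exists (lift_family S); split; [exact (lift_param_simulation S e HS) | split; auto].
  - intros [R [HR Hpq]].
    exists (restrict_family R); split; [exact (restrict_rdjoin_simulation R p HR) | left; exact Hpq].
Qed.

Lemma param_bisimilar_iff_rdjoin (e : Env) (p q : Pr) :
  param_bisimilar trP trE e p q <-> bisimilar (rdjoin_lts trP trE) (p, e) (q, e).
Proof.
  split.
  - intros [B [HB Hpq]]; apply is_param_bisimulation_iff in HB as [Hforth Hback].
    exists (lift_family B); split; [split | split; auto].
    + exact (lift_param_simulation B e Hforth).
    + apply (is_simulation_ext (lift_family_flip B)).
      exact (lift_param_simulation _ e Hback).
  - intros [R [[Hforth Hback] Hpq]].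
    exists (restrict_family R); split; [apply is_param_bisimulation_iff; split | left; exact Hpq].
    + exact (restrict_rdjoin_simulation R p Hforth).
    + apply (is_param_simulation_ext (restrict_family_flip R)).
      exact (restrict_rdjoin_simulation _ p Hback).
Qed.

Lemma rdjoin_simulatable_join (s t : Pr * Env) :
  simulatable (rdjoin_lts trP trE) s t -> simulatable (join_lts trP trE) s t.
Proof.
  intros [R [HR Hst]]; exists R; split; [exact (rdjoin_simulation_is_join_simulation R HR) | exact Hst].
Qed.

Lemma rdjoin_bisimilar_join (s t : Pr * Env) :
  bisimilar (rdjoin_lts trP trE) s t -> bisimilar (join_lts trP trE) s t.
Proof.
  intros [R [[Hforth Hback] Hst]]; exists R; split; [split | exact Hst];
    apply rdjoin_simulation_is_join_simulation; assumption.
Qed.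

End Joins.

Theorem lemma3p5 (Pr Env A : Type) (trP : lts Pr A) (trE : lts Env A)
  (p q : Pr) (e : Env) :
  ((param_simulatable trP trE e p q <-> simulatable (rdjoin_lts trP trE) (p, e) (q, e)) /\
   (simulatable (rdjoin_lts trP trE) (p, e) (q, e) ->
      simulatable (join_lts trP trE) (p, e) (q, e)) /\
   (simulatable (join_lts trP trE) (p, e) (q, e) <-> ji_simulatable trP trE e p q))
  /\
  ((param_bisimilar trP trE e p q <-> bisimilar (rdjoin_lts trP trE) (p, e) (q, e)) /\
   (bisimilar (rdjoin_lts trP trE) (p, e) (q, e) ->
      bisimilar (join_lts trP trE) (p, e) (q, e)) /\
   (bisimilar (join_lts trP trE) (p, e) (q, e) <-> ji_bisimilar trP trE e p q)).
Proof.
  split; split; [| split | | split].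
  - apply param_simulatable_iff_rdjoin.
  - apply rdjoin_simulatable_join.
  - tauto.
  - apply param_bisimilar_iff_rdjoin.
  - apply rdjoin_bisimilar_join.
  - tauto.
Qed.
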